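(* Let $A\in\mathbb{Z}^{d\times n}$, $\mathbf{b}\in\mathbb{Z}^d$, $\mathbf{c}\in\mathbb{Z}^n$, $\mathbf{u}\in\mathbb{Z}_{\ge0}^n$. Let $\mathbf{x}_k$ be feasible and let $\alpha_1\mathbf{z}_1,\dots,\alpha_j\mathbf{z}_j$ ($j\ge2$) be successive steepest-descent augmentations, i.e. $\alpha_i\mathbf{z}_i$ is a steepest-descent augmentation relative to $\mathbf{x}_k+\sum_{l<i}\alpha_l\mathbf{z}_l$ for each $i$. If $\mathbf{z}_1$ and $\mathbf{z}_j$ do not have the same sign pattern, then $-\mathbf{c}^\top\mathbf{z}_1/\|\mathbf{z}_1\|_1\ >\ -\mathbf{c}^\top\mathbf{z}_j/\|\mathbf{z}_j\|_1$.
   Context: Feasible means $A\mathbf{x}=\mathbf{b}$, $\mathbf{0}\le\mathbf{x}\le\mathbf{u}$, $\mathbf{x}\in\mathbb{Z}^n$. A steepest-descent augmentation relative to a feasible $\mathbf{x}$ is $\alpha\mathbf{s}$ where $\mathbf{s}\in\mathbb{Z}^n\setminus\{\mathbf{0}\}$, $A\mathbf{s}=\mathbf{0}$, $\mathbf{c}^\top\mathbf{s}<0$, $\alpha$ is a positive integer with $\mathbf{x}+\alpha\mathbf{s}$ feasible, and $-\mathbf{c}^\top\mathbf{s}/\|\mathbf{s}\|_1\ge-\mathbf{c}^\top\mathbf{z}/\|\mathbf{z}\|_1$ for every $\mathbf{z}\in\mathbb{Z}^n\setminus\{\mathbf{0}\}$ with $A\mathbf{z}=\mathbf{0}$ and $\mathbf{x}+\mathbf{z}$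 feasible. Two vectors $\mathbf{v},\mathbf{w}\in\mathbb{R}^n$ have the same sign pattern if $v_iw_i\ge0$ for all $i$ (i.e. there is no coordinate in which one is positive and the other negative). *)

From HB Require Import structures.
From mathcomp Require Import all_boot all_order all_algebra.
Set Implicit Arguments. Unset Strict Implicit. Unset Printing Implicit Defensive.
Import Order.TTheory GRing.Theory Num.Theory.
Local Open Scope ring_scope.

Definition feasible (d n : nat) (A : 'M[int]_(d, n)) (b : 'cV[int]_d)
  (u : 'cV[int]_n) (x : 'cV[int]_n) : Prop :=
  A *m x = b /\ (forall i : 'I_n, 0 <= x i 0 /\ x i 0 <= u i 0).

Definition cdot (n : nat) (c z : 'cV[int]_n) : int := \sum_(i < n) c i 0 * z i 0.

Definition l1norm (n : nat) (z : 'cV[int]_n) : int := \sum_(i < n) `|z i 0|.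

Definition descent_ratio (n : nat) (c z : 'cV[int]_n) : rat :=
  (- cdot c z)%:~R / (l1norm z)%:~R.

Definition sd_augmentation (d n : nat) (A : 'M[int]_(d, n)) (b : 'cV[int]_d)
  (c u : 'cV[int]_n) (x : 'cV[int]_n) (alpha : int) (s : 'cV[int]_n) : Prop :=
  s != 0 /\ A *m s = 0 /\ cdot c s < 0 /\ 0 < alpha /\
      feasible A b u (x + alpha *: s) /\
      (forall z : 'cV[int]_n, z != 0 -> A *m z = 0 -> feasible A b u (x + z) ->
        descent_ratio c z <= descent_ratio c s).

Definition same_sign_pattern (n : nat) (v w : 'cV[int]_n) : Prop :=
  forall i : 'I_n, 0 <= v i 0 * w i 0.

(* If s is steepest from x
   and t is steepest from x + a s, then a s + t is admissible from x, and since
   the 1-norm is subadditive its ratio is at least the mediant of those of s and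
   t; so the ratios of successive steepest-descent steps never increase.  If the
   last ratio were at least the first, z_1 would have the least ratio of all
   steps.  The combined step a_1 z_1 + ... + a_(j-2) z_(j-2) + z_(j-1) is
   admissible from x_k, and optimality of z_1 then forces its 1-norm to be the
   full weighted sum of the ||z_i||_1, i.e. no cancellation; but z_1 and
   z_(j-1) have opposite signs in some coordinate. *)
From HB Require Import structures.
From mathcomp Require Import all_boot all_order all_algebra zify.
Import Order.TTheory GRing.Theory Num.Theory.
Local Open Scope ring_scope.
Set Implicit Arguments. Unset Strict Implicit.

Lemma cdotE n (c v : 'cV[int]_n) : cdot c v = (c^T *m v) 0 0.
Proof. by rewrite mxE; apply: eq_bigr => i _; rewrite mxE. Qed.

Lemma cdot0r n (c : 'cV[int]_n) : cdot c 0 = 0.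
Proof. by rewrite cdotE mulmx0 mxE. Qed.

Lemma cdot_neq0 n (c v : 'cV[int]_n) : cdot c v != 0 -> v != 0.
Proof. by apply: contraNneq => ->; rewrite cdot0r. Qed.

Lemma cdotDZ n (c v w : 'cV[int]_n) a :
  cdot c (a *: v + w) = a * cdot c v + cdot c w.
Proof. by rewrite !cdotE mulmxDr -scalemxAr !mxE. Qed.

Lemma cdot_sum n (c : 'cV[int]_n) m (g : nat -> int) (v : nat -> 'cV[int]_n) :
  cdot c (\sum_(i < m) g i *: v i) = \sum_(i < m) g i * cdot c (v i).
Proof.
rewrite cdotE mulmx_sumr summxE; apply: eq_bigr => i _.
by rewrite -scalemxAr mxE -cdotE.
Qed.

Lemma l1norm0 n : l1norm (0 : 'cV[int]_n) = 0.
Proof. by rewrite /l1norm big1 // => i _; rewrite mxE. Qed.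

Lemma l1norm_ge0 n (v : 'cV[int]_n) : 0 <= l1norm v.
Proof. exact: sumr_ge0. Qed.

Lemma l1norm_gt0 n (v : 'cV[int]_n) : v != 0 -> 0 < l1norm v.
Proof.
move=> v0; rewrite lt_def l1norm_ge0 andbT; apply: contra v0 => /eqP N0.
apply/eqP/matrixP => i k; rewrite ord1 mxE; apply/eqP; rewrite -normr_eq0; apply/eqP.
exact: (psumr_eq0P _ N0).
Qed.

Lemma l1normDZ n (v w : 'cV[int]_n) a :
  0 <= a -> l1norm (a *: v + w) <= a * l1norm v + l1norm w.
Proof.
move=> a0; rewrite /l1norm mulr_sumr -big_split /=; apply: ler_sum => i _.
by rewrite !mxE (le_trans (ler_normD _ _)) // normrM ger0_norm.
Qed.

Lemma ltr_norm_sum_cancel m (a : 'I_m -> int) p q :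
  p != q -> a p * a q < 0 -> `|\sum_i a i| < \sum_i `|a i|.
Proof.
move=> pq apq.
rewrite [X in `|X| < _](bigD1 p) //= [X in `|_ + X| < _](bigD1 q) 1?eq_sym //=.
rewrite [X in _ < X](bigD1 p) //= [X in _ < _ + X](bigD1 q) 1?eq_sym //=.
set r := \sum_(i | _ && _) a i; set R := \sum_(i | _ && _) `|a i|.
have : `|r| <= R by exact: ler_norm_sum.
nia.
Qed.

Lemma l1norm_sum_cancel n m (g : nat -> int) (v : nat -> 'cV[int]_n) (p q : 'I_m) k :
  (forall i, 0 <= g i) -> p != q -> (g p * v p k 0) * (g q * v q k 0) < 0 ->
  l1norm (\sum_(i < m) g i *: v i) < \sum_(i < m) g i * l1norm (v i).
Proof.
move=> g0 pq vk.
have -> : \sum_(i < m) g i * l1norm (v i) = \sum_(l < n) \sum_(i < m) `|g i * v i l 0|.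
  rewrite exchange_big; apply: eq_bigr => i _; rewrite mulr_sumr.
  by apply: eq_bigr => l _; rewrite normrM ger0_norm.
rewrite /l1norm (bigD1 k) //= [ltRHS](bigD1 k) //=.
have coord l : (\sum_(i < m) g i *: v i) l 0 = \sum_(i < m) g i * v i l 0.
  by rewrite summxE; apply: eq_bigr => i _; rewrite mxE.
apply: ltr_leD; first by rewrite coord; exact: ltr_norm_sum_cancel vk.
by apply: ler_sum => l _; rewrite coord ler_norm_sum.
Qed.

Lemma le_descent_ratio n (c v w : 'cV[int]_n) : v != 0 -> w != 0 ->
  (descent_ratio c v <= descent_ratio c w) =
  (- cdot c v * l1norm w <= - cdot c w * l1norm v).
Proof.
move=> /l1norm_gt0 v0 /l1norm_gt0 w0.
rewrite /descent_ratio ler_pdivrMr ?ltr0z // mulrAC.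
by rewrite ler_pdivlMr ?ltr0z // -!intrM ler_int.
Qed.

Lemma feasible_unit_step d n (A : 'M[int]_(d, n)) b u (x s : 'cV[int]_n) a :
  feasible A b u x -> feasible A b u (x + a *: s) -> 0 < a -> A *m s = 0 ->
  feasible A b u (x + s).
Proof.
move=> [Ax xb] [_ xsb] a0 As; split; first by rewrite mulmxDr Ax As addr0.
move=> i; have := xb i; have := xsb i; rewrite !mxE.
move: (x i 0) (s i 0) (u i 0) => X S U; nia.
Qed.

Section SteepestDescent.
Variables (d n : nat) (A : 'M[int]_(d, n)) (b : 'cV[int]_d) (c u : 'cV[int]_n).

Lemma sd_augmentation_ratio_le (x s t : 'cV[int]_n) a a' :
  sd_augmentation A b c u x a s -> sd_augmentation A b c u (x + a *: s) a' t ->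
  descent_ratio c t <= descent_ratio c s.
Proof.
move=> [s0 [As [cs [a0 [xs best]]]]] [t0 [At [ct [a'0 [xst _]]]]].
set w := a *: s + t.
have cw : cdot c w = a * cdot c s + cdot c t by exact: cdotDZ.
have Nw : l1norm w <= a * l1norm s + l1norm t by apply: l1normDZ; exact: ltW.
have Aw : A *m w = 0 by rewrite mulmxDr -scalemxAr As At scaler0 addr0.
have w0 : w != 0 by apply/(@cdot_neq0 _ c)/ltr0_neq0; rewrite cw; nia.
have /(_ w w0 Aw) := best; rewrite addrA => /(_ (feasible_unit_step xs xst a'0 At)).
rewrite !le_descent_ratio //.
have := l1norm_gt0 s0; have := l1norm_gt0 t0; nia.
Qed.

Lemma sd_augmentation_l1norm_sum x a s m (g : nat -> int) (v : nat -> 'cV[int]_n) :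
  let w := \sum_(i < m) g i *: v i in
  sd_augmentation A b c u x a s -> A *m w = 0 -> feasible A b u (x + w) ->
  (forall i : 'I_m, 0 <= g i) -> (forall i : 'I_m, v i != 0) ->
  (forall i : 'I_m, descent_ratio c s <= descent_ratio c (v i)) ->
  \sum_(i < m) g i * l1norm (v i) <= l1norm w.
Proof.
move=> w [s0 [_ [cs [_ [_ best]]]]] Aw xw g0 v0 ratio_v.
have Ps : 0 < - cdot c s by rewrite oppr_gt0.
have lower : - cdot c s * \sum_(i < m) g i * l1norm (v i) <= - cdot c w * l1norm s.
  rewrite /w cdot_sum mulr_sumr mulNr mulr_suml -[leRHS]sumrN; apply: ler_sum => i _.
  have := ratio_v i; rewrite le_descent_ratio //; have := g0 i; nia.
have upper : - cdot c w * l1norm s <= - cdot c s * l1norm w.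
  have [->|w0] := eqVneq w 0; first by rewrite cdot0r l1norm0 oppr0 mul0r mulr0.
  by rewrite -le_descent_ratio //; exact: best.
by rewrite -(ler_pM2l Ps) (le_trans lower upper).
Qed.

End SteepestDescent.

Section SuccessiveAugmentations.
Variables (d n : nat) (A : 'M[int]_(d, n)) (b : 'cV[int]_d) (c u xk : 'cV[int]_n).
Variables (j : nat) (alpha : nat -> int) (z : nat -> 'cV[int]_n).
Hypothesis augment : forall i, (i < j)%N ->
  sd_augmentation A b c u (xk + \sum_(l < i) alpha l *: z l) (alpha i) (z i).

Lemma successive_sd_ratio_antitone i k : (i <= k < j)%N ->
  descent_ratio c (z k) <= descent_ratio c (z i).
Proof.
elim: k => [|k IH] /andP[ik kj]; first by move: ik; rewrite leqn0 => /eqP->.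
move: ik; rewrite leq_eqVlt => /orP[/eqP->//|ik].
apply: (le_trans _ (IH _)); last by rewrite -ltnS ik ltnW.
have := augment kj; rewrite big_ord_recr /= addrA.
exact: sd_augmentation_ratio_le (augment (ltnW kj)).
Qed.

Lemma successive_sd_feasible_unit_step i : (0 < i < j)%N ->
  feasible A b u (xk + \sum_(l < i) alpha l *: z l + z i).
Proof.
case: i => [|i] // /andP[_ ij]; have [_ [Az [_ [a0 [xz _]]]]] := augment ij.
have [_ [_ [_ [_ [xi _]]]]] := augment (ltnW ij).
by apply: (feasible_unit_step _ xz a0 Az); rewrite big_ord_recr addrA.
Qed.

End SuccessiveAugmentations.

Section LastUnitStep.
Variables (d n : nat) (A : 'M[int]_(d, n)) (b : 'cV[int]_d) (c u xk : 'cV[int]_n).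
Variables (m : nat) (alpha : nat -> int) (z : nat -> 'cV[int]_n).
Hypothesis augment : forall i, (i < m.+2)%N ->
  sd_augmentation A b c u (xk + \sum_(l < i) alpha l *: z l) (alpha i) (z i).

Definition last_unit_weight i := if (i < m.+1)%N then alpha i else 1.

Lemma last_unit_weight_ge0 i : 0 <= last_unit_weight i.
Proof.
rewrite /last_unit_weight; case: ifP => // /ltnW im.
by have [_ [_ [_ [/ltW]]]] := augment im.
Qed.

Lemma successive_sd_combined_l1norm :
  descent_ratio c (z 0%N) <= descent_ratio c (z m.+1) ->
  \sum_(i < m.+2) last_unit_weight i * l1norm (z i)
    <= l1norm (\sum_(i < m.+2) last_unit_weight i *: z i).
Proof.
move=> ratio_last.
have := augment (isT : 0 < m.+2)%N; rewrite big_ord0 addr0 => /sd_augmentation_l1norm_sum.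
apply.
- rewrite mulmx_sumr big1 // => i _; have [_ [Az _]] := augment (ltn_ord i).
  by rewrite -scalemxAr Az scaler0.
- rewrite big_ord_recr /= {2}/last_unit_weight ltnn scale1r addrA.
  rewrite (eq_bigr (fun l : 'I_m.+1 => alpha l *: z l)) => [|i _]; last first.
    by rewrite /last_unit_weight /= ltn_ord.
  by apply: (successive_sd_feasible_unit_step augment) => /=.
- move=> i; exact: last_unit_weight_ge0.
- by move=> i; have [] := augment (ltn_ord i).
- move=> i; apply: (le_trans ratio_last); apply: (successive_sd_ratio_antitone augment).
  by rewrite leq_ord ltnSn.
Qed.

End LastUnitStep.

Unset Implicit Arguments. Set Strict Implicit.

Theorem lemma5 (d n : nat) (A : 'M[int]_(d, n)) (b : 'cV[int]_d)
  (c u : 'cV[int]_n) (xk : 'cV[int]_n) (j : nat)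
  (alpha : nat -> int) (z : nat -> 'cV[int]_n) :
  (forall i : 'I_n, 0 <= u i 0) ->
  feasible A b u xk ->
  (2 <= j)%N ->
  (forall i : nat, (i < j)%N ->
     sd_augmentation A b c u (xk + \sum_(l < i) alpha l *: z l) (alpha i) (z i)) ->
  ~ same_sign_pattern (z 0%N) (z j.-1) ->
  descent_ratio c (z j.-1) < descent_ratio c (z 0%N).
Proof.
move=> _ _; case: j => [|[|m]] //= _ augment not_same.
have [k zk] : exists k, z 0%N k 0 * z m.+1 k 0 < 0.
  by apply/existsP; apply: contra_notT not_same => /existsPn zk i; rewrite leNgt zk.
rewrite ltNge; apply/negP => ratio_last.
set g := last_unit_weight m alpha.
have cancel : (g 0%N * z 0%N k 0) * (g m.+1 * z m.+1 k 0) < 0.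
  have [_ [_ [_ [alpha0 _]]]] := augment 0%N isT.
  by rewrite /g /last_unit_weight /= ltnn mul1r; nia.
have ord0_max : ord0 != ord_max :> 'I_m.+2 by [].
have := l1norm_sum_cancel (last_unit_weight_ge0 augment) ord0_max cancel.
by rewrite ltNge (successive_sd_combined_l1norm augment).
Qed.
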